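(* Let $g=\begin{pmatrix}a&b\\c&d\end{pmatrix}\in\mathrm{SL}_2(\mathbb R)\setminus S$. Then $$v(g):=\log\big(|ad|^{1/2}+|bc|^{1/2}\big)=\tfrac12\,d_{\mathbb H}\big(g\,(i\mathbb R_+),\ i\mathbb R_+\big)>0.$$
   Context: $s=\{g\in\mathrm{SL}_2(\mathbb R): abcd=0\}$ (equivalently, $g$ maps some point of $\{0,i\infty\}$ to some point of $\{0,i\infty\}$), and $S=s\cup\{g\in\mathrm{SL}_2(\mathbb R): g(iy_1)=iy_2\text{ for some }y_1,y_2>0\}$. $i\mathbb R_+$ is the imaginary axis (geodesic from $0$ to $i\infty$) in the upper half-plane, and $d_{\mathbb H}(A,B)=\inf_{z\in A,w\in B}d_{\mathbb H}(z,w)$ is the hyperbolic distance between sets. *)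

From Stdlib Require Import Reals.
From Coquelicot Require Import Coquelicot.
Open Scope R_scope.

Definition arcosh (t : R) : R := ln (t + sqrt (t ^ 2 - 1)).

Definition dH (z w : C) : R :=
  arcosh (1 + (Cmod (z - w)) ^ 2 / (2 * Im z * Im w)).

Definition mobius (a b c d : R) (z : C) : C :=
  (RtoC a * z + RtoC b) / (RtoC c * z + RtoC d).

Definition imag_axis (z : C) : Prop := Re z = 0 /\ 0 < Im z.

Definition hdist_sets (A B : C -> Prop) : Rbar :=
  Glb_Rbar (fun r => exists z w, A z /\ B w /\ r = dH z w).

Definition mob_image (a b c d : R) (A : C -> Prop) (z : C) : Prop :=
  exists w, A w /\ z = mobius a b c d w.

Definition in_s (a b c d : R) : Prop := a * b * c * d = 0.
Definition in_S (a b c d : R) : Prop :=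
  in_s a b c d \/
  exists y1 y2, 0 < y1 /\ 0 < y2 /\
    mobius a b c d (0, y1) = ((0, y2) : C).

Definition v (a b c d : R) : R :=
  ln (sqrt (Rabs (a * d)) + sqrt (Rabs (b * c))).

From Stdlib Require Import Reals Lra Psatz.
From Coquelicot Require Import Coquelicot.
Open Scope R_scope.

(* For [y > 0] one has [g(iy) = sY + iY] with [Y > 0] and [s = bd/y + ac y].  If [abcd < 0]
   then [s] vanishes for some [y], so [g] maps a point of [iR+] into [iR+] and [g] lies in [S];
   hence [abcd > 0] and [s^2 = 4abcd + (bd/y - ac y)^2 >= 4abcd], with equality where
   [bd/y = ac y].  A point [sY + iY] lies at distance at least [arcosh K] from [iR+] as soon as
   [s^2 >= K^2 - 1], with equality at [iKY] when [s^2 = K^2 - 1].  Taking [K = |ad| + |bc|],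
   which satisfies [K^2 - 1 = 4abcd] because [|ad| - |bc| = +-1], the distance is [arcosh K],
   and [arcosh K = 2 log(|ad|^(1/2) + |bc|^(1/2))]. *)

Lemma arcosh_le (x y : R) : 1 <= x -> x <= y -> arcosh x <= arcosh y.
Proof.
  intros Hx Hxy; unfold arcosh; apply ln_le.
  - pose proof (sqrt_pos (x ^ 2 - 1)); lra.
  - assert (Hsq : sqrt (x ^ 2 - 1) <= sqrt (y ^ 2 - 1)) by (apply sqrt_le_1_alt; nra).
    lra.
Qed.

Lemma arcosh_gt0 (x : R) : 1 < x -> 0 < arcosh x.
Proof.
  intros Hx; unfold arcosh; rewrite <- ln_1.
  pose proof (sqrt_pos (x ^ 2 - 1)); apply ln_increasing; lra.
Qed.

(* [(A + B)^2 - 1 = 4AB] makes [A + B + sqrt ((A + B)^2 - 1)] the perfect square [(sqrt A + sqrt B)^2]. *)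
Lemma arcosh_sum_sqrt (A B : R) : 0 <= A -> 0 <= B -> (A + B) ^ 2 - 1 = 4 * (A * B) ->
  arcosh (A + B) = 2 * ln (sqrt A + sqrt B).
Proof.
  intros HA HB HAB; unfold arcosh.
  pose proof (pow2_sqrt A HA) as HsA; pose proof (pow2_sqrt B HB) as HsB.
  pose proof (sqrt_pos A); pose proof (sqrt_pos B).
  assert (Hroot : sqrt ((A + B) ^ 2 - 1) = 2 * sqrt A * sqrt B).
  { rewrite HAB; replace (4 * (A * B)) with ((2 * sqrt A * sqrt B) ^ 2) by nra.
    apply sqrt_pow2; nra. }
  assert (Hpos : 0 < sqrt A + sqrt B).
  { assert (0 < A + B) by nra.
    destruct (Req_dec (sqrt A + sqrt B) 0) as [Hz|Hz]; [nra | lra]. }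
  rewrite Hroot; replace (A + B + 2 * sqrt A * sqrt B) with ((sqrt A + sqrt B) ^ 2) by nra.
  rewrite ln_pow by exact Hpos; simpl; ring.
Qed.

Lemma dH_imag_axis (X Y t : R) :
  dH (X, Y) (0, t) = arcosh (1 + (X ^ 2 + (Y - t) ^ 2) / (2 * Y * t)).
Proof.
  unfold dH, Cmod; simpl.
  rewrite !Rmult_1_r, sqrt_sqrt by (apply Rplus_le_le_0_compat; apply Rle_0_sqr).
  do 3 f_equal; ring.
Qed.

(* [cosh dH((X,Y),(0,t)) >= K] reduces to [X^2 + Y^2 + t^2 >= 2KYt], i.e. AM-GM for [KY] and [t]. *)
Lemma dH_imag_axis_ge (X Y t K : R) : 0 < Y -> 0 < t -> 1 <= K ->
  (K ^ 2 - 1) * Y ^ 2 <= X ^ 2 -> arcosh K <= dH (X, Y) (0, t).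
Proof.
  intros HY Ht HK HX; rewrite dH_imag_axis; apply arcosh_le; [lra |].
  assert (Hdiff : 1 + (X ^ 2 + (Y - t) ^ 2) / (2 * Y * t) - K
                  = (X ^ 2 + Y ^ 2 + t ^ 2 - 2 * K * Y * t) / (2 * Y * t)) by (field; lra).
  assert (Hnum : 0 <= (X ^ 2 + Y ^ 2 + t ^ 2 - 2 * K * Y * t) / (2 * Y * t)).
  { apply Rdiv_le_0_compat; [| nra]. pose proof (pow2_ge_0 (t - K * Y)); nra. }
  lra.
Qed.

Lemma dH_imag_axis_eq (X Y K : R) : 0 < Y -> 0 < K ->
  X ^ 2 = (K ^ 2 - 1) * Y ^ 2 -> dH (X, Y) (0, K * Y) = arcosh K.
Proof.
  intros HY HK HX; rewrite dH_imag_axis, HX; f_equal; field; lra.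
Qed.

Lemma Glb_Rbar_attained (E : R -> Prop) (m : R) :
  (forall r, E r -> m <= r) -> E m -> Glb_Rbar E = Finite m.
Proof.
  intros Hlow Hm; apply is_glb_Rbar_unique; split.
  - intros r Hr; exact (Hlow r Hr).
  - intros l Hl; exact (Hl m Hm).
Qed.

Lemma balance_point (p q : R) : 0 < p * q -> exists y, 0 < y /\ p / y = q * y.
Proof.
  intros Hpq.
  assert (Hq : q <> 0) by (intro E; rewrite E in Hpq; lra).
  assert (Hratio : 0 < p / q) by (replace (p / q) with (p * q / q ^ 2) by (field; exact Hq);
                                  apply Rdiv_lt_0_compat; [exact Hpq | now apply pow2_gt_0]).
  exists (sqrt (p / q)); split; [now apply sqrt_lt_R0 |].
  assert (Hy : sqrt (p / q) * sqrt (p / q) = p / q) by (apply sqrt_sqrt; lra).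
  assert (sqrt (p / q) <> 0) by (apply Rgt_not_eq, sqrt_lt_R0, Hratio).
  apply (Rmult_eq_reg_r (sqrt (p / q))); [| assumption].
  rewrite (Rmult_assoc q), Hy; field; split; assumption.
Qed.

Lemma mobius_imag_axis (a b c d y : R) : a * d - b * c = 1 -> 0 < y ->
  exists Y, 0 < Y /\ mobius a b c d (0, y) = ((b * d / y + a * c * y) * Y, Y).
Proof.
  intros hdet Hy.
  assert (HD : 0 < d ^ 2 + c ^ 2 * y ^ 2).
  { destruct (Req_dec c 0) as [Hc | Hc].
    - subst c; assert (d <> 0) by (intro E; subst d; lra).
      pose proof (pow2_gt_0 d); lra.
    - pose proof (pow2_gt_0 c Hc); pose proof (pow2_gt_0 y (Rgt_not_eq _ _ Hy)).
      pose proof (pow2_ge_0 d); nra. }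
  exists (y / (d ^ 2 + c ^ 2 * y ^ 2)); split; [now apply Rdiv_lt_0_compat |].
  unfold mobius, Cdiv, Cinv, Cmult, Cplus, RtoC; simpl.
  f_equal; [field; split; nra |].
  transitivity (y * (a * d - b * c) / (d ^ 2 + c ^ 2 * y ^ 2)); [field; nra |].
  rewrite hdet; field; nra.
Qed.

Lemma abs_sum_sqr_sub1 (u w : R) : u - w = 1 -> 0 <= u * w ->
  (Rabs u + Rabs w) ^ 2 - 1 = 4 * (u * w).
Proof.
  intros Huw Hprod.
  replace 1 with ((u - w) ^ 2) by (rewrite Huw; ring).
  unfold Rabs; destruct (Rcase_abs u), (Rcase_abs w); nra.
Qed.

Lemma abs_sum_gt1 (a b c d : R) : a * d - b * c = 1 -> 0 < a * b * c * d ->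
  1 < Rabs (a * d) + Rabs (b * c).
Proof.
  intros hdet HP.
  pose proof (abs_sum_sqr_sub1 (a * d) (b * c) hdet ltac:(nra)).
  pose proof (Rabs_pos (a * d)); pose proof (Rabs_pos (b * c)); nra.
Qed.

Lemma arcosh_abs_sum (a b c d : R) : a * d - b * c = 1 -> 0 <= a * b * c * d ->
  arcosh (Rabs (a * d) + Rabs (b * c)) = 2 * v a b c d.
Proof.
  intros hdet HP; apply arcosh_sum_sqrt; try apply Rabs_pos.
  rewrite abs_sum_sqr_sub1 by (auto; nra).
  rewrite <- Rabs_mult, Rabs_pos_eq by nra; reflexivity.
Qed.

Lemma not_in_S_abcd_pos (a b c d : R) : a * d - b * c = 1 -> ~ in_S a b c d ->
  0 < a * b * c * d.
Proof.
  intros hdet hS.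
  destruct (Rtotal_order (a * b * c * d) 0) as [Hneg | [Hzero | Hpos]];
    [exfalso; apply hS; right | exfalso; apply hS; left; exact Hzero | exact Hpos].
  destruct (balance_point (b * d) (- (a * c)) ltac:(nra)) as (y & Hy & Hbal).
  destruct (mobius_imag_axis a b c d y hdet Hy) as (Y & HY & Himg).
  exists y, Y; repeat split; try assumption.
  rewrite Himg; f_equal; rewrite Hbal; ring.
Qed.

Lemma hdist_orbit_imag_axis (a b c d : R) : a * d - b * c = 1 -> 0 < a * b * c * d ->
  hdist_sets (mob_image a b c d imag_axis) imag_axis
  = Finite (arcosh (Rabs (a * d) + Rabs (b * c))).
Proof.
  intros hdet HP.
  pose proof (abs_sum_gt1 a b c d hdet HP) as HK.
  pose proof (abs_sum_sqr_sub1 (a * d) (b * c) hdet ltac:(nra)) as HK2.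
  set (K := Rabs (a * d) + Rabs (b * c)) in *.
  assert (Hratio : forall y, 0 < y ->
            (b * d / y + a * c * y) ^ 2 = (K ^ 2 - 1) + (b * d / y - a * c * y) ^ 2).
  { intros y Hy; rewrite HK2; field; lra. }
  apply Glb_Rbar_attained.
  - intros r (z & w & (w0 & [Hre0 Hy] & ->) & [Hre Ht] & ->).
    destruct w0 as [x0 y], w as [x t]; simpl in Hre0, Hy, Hre, Ht; subst x0 x.
    destruct (mobius_imag_axis a b c d y hdet Hy) as (Y & HY & ->).
    apply dH_imag_axis_ge; try lra.
    rewrite Rpow_mult_distr, (Hratio y Hy).
    pose proof (pow2_ge_0 (b * d / y - a * c * y)); pose proof (pow2_ge_0 Y); nra.
  - destruct (balance_point (b * d) (a * c) ltac:(nra)) as (y & Hy & Hbal).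
    destruct (mobius_imag_axis a b c d y hdet Hy) as (Y & HY & Himg).
    exists (mobius a b c d (0, y)), (0, K * Y); repeat split.
    + exists (0, y); repeat split; simpl; auto.
    + simpl; nra.
    + rewrite Himg, dH_imag_axis_eq; try lra.
      rewrite Rpow_mult_distr, (Hratio y Hy), Hbal; ring.
Qed.

Theorem proposition4p4 (a b c d : R) (hdet : a * d - b * c = 1)
  (hS : ~ in_S a b c d) :
  Finite (v a b c d) =
    Rbar_mult (/ 2) (hdist_sets (mob_image a b c d imag_axis) imag_axis)
  /\ 0 < v a b c d.
Proof.
  pose proof (not_in_S_abcd_pos a b c d hdet hS) as HP.
  pose proof (arcosh_gt0 _ (abs_sum_gt1 a b c d hdet HP)) as Hpos.
  rewrite hdist_orbit_imag_axis, arcosh_abs_sum in * by (auto; lra).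
  split; [simpl; f_equal |]; lra.
Qed.
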